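(* Let $\mathcal V\subseteq B(H)$ be an operator system and let $p\in\mathcal V$ be a projection in $B(H)$. Then $(\mathcal V/J_p,\{\widetilde C(p_n)\}_n,p+J_p)$ is an operator system.
   Context: $p_n=I_n\otimes p$; $C(p_n)=\{x\in M_n(\mathcal V): x=x^*,\ p_nxp_n\ge 0\text{ in } B(H^n)\}$; $J_p=\operatorname{span}(C(p)\cap-C(p))$; $\widetilde C(p_n)=\{(x_{ij}+J_p)\in M_n(\mathcal V/J_p):(x_{ij})\in C(p_n)\}$. An operator system is a $*$-vector space with a proper matrix ordering (cones $D_n\subseteq M_n(\cdot)_h$, $\alpha^*D_n\alpha\subseteq D_m$, $D_n\cap-D_n=\{0\}$) and an Archimedean matrix order unit. *)

From HB Require Import structures.
From mathcomp Require Import all_boot all_order all_algebra.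
From mathcomp Require Import reals.
From mathcomp Require Import complex.
Set Implicit Arguments. Unset Strict Implicit. Unset Printing Implicit Defensive.
Import Order.TTheory GRing.Theory Num.Theory.
Local Open Scope ring_scope.

Section OperatorSystems.
Variable R : realType.
Local Notation C := (R[i]).
(* H : a complex vector space with inner product [ip], linear in the first
   argument, conjugate-linear in the second. *)
Variable H : lmodType C.
Variable ip : H -> H -> C.

(* Cauchy sequences / convergence for the norm ||x|| = sqrt (ip x x);
   stated with squared norms. *)
Definition ip_complete : Prop :=
  forall u : nat -> H,
    (forall eps : C, 0 < eps -> exists N : nat, forall m n : nat,
        (N <= m)%N -> (N <= n)%N -> ip (u m - u n) (u m - u n) < eps) ->
    exists l : H, forall eps : C, 0 < eps -> exists N : nat, forall n : nat,
        (N <= n)%N -> ip (u n - l) (u n - l) < eps.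

Definition is_hilbert_space : Prop :=
  [/\ forall (a : C) (x y z : H), ip (a *: x + y) z = a * ip x z + ip y z,
      forall x y : H, ip y x = (ip x y)^*,
      forall x : H, 0 <= ip x x,
      forall x : H, ip x x = 0 -> x = 0
    & ip_complete].

Definition bounded_op (T : H -> H) : Prop :=
  (forall (a : C) (x y : H), T (a *: x + y) = a *: T x + T y) /\
  exists M : C, forall x : H, ip (T x) (T x) <= M * ip x x.

Definition is_adjoint (T S : H -> H) : Prop :=
  forall u v : H, ip (T u) v = ip u (S v).

Definition concrete_operator_system (V : (H -> H) -> Prop) : Prop :=
  [/\ forall T, V T -> bounded_op T,
      V (fun h => h),
      forall (a : C) (S T : H -> H), V S -> V T -> V (fun h => a *: S h + T h)
    & forall T, V T -> exists2 S, V S & is_adjoint T S].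

Definition is_projection (p : H -> H) : Prop :=
  bounded_op p /\ is_adjoint p p /\ forall h, p (p h) = p h.

Definition opmat (n : nat) := 'I_n -> 'I_n -> (H -> H).

Definition in_mat (V : (H -> H) -> Prop) n (X : opmat n) : Prop :=
  forall i j, V (X i j).

Definition herm_mat n (X : opmat n) : Prop :=
  forall i j, is_adjoint (X i j) (X j i).

(* C(p_n) = { x in M_n(V) : x = x^*, p_n x p_n >= 0 in B(H^n) },
   with p_n = I_n ⊗ p and <T v, v> = sum_i <(T v)_i, v_i>. *)
Definition Cpn (V : (H -> H) -> Prop) (p : H -> H) n (X : opmat n) : Prop :=
  [/\ in_mat V X, herm_mat X &
      forall v : 'I_n -> H,
        0 <= \sum_(i < n) ip (\sum_(j < n) p (X i j (p (v j)))) (v i)].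

Definition Cp1 V p (x : H -> H) : Prop := Cpn V p (fun (_ _ : 'I_1) => x).

(* J_p = span (C(p) ∩ -C(p)) (complex linear span) *)
Definition Jp V p (x : H -> H) : Prop :=
  exists (k : nat) (c : 'I_k -> C) (y : 'I_k -> H -> H),
    (forall i, Cp1 V p (y i) /\ Cp1 V p (fun h => - y i h)) /\
    forall h, x h = \sum_(i < k) c i *: y i h.

Definition modJ (J : (H -> H) -> Prop) (x y : H -> H) : Prop :=
  J (fun h => x h - y h).

(* Working in M_n(V/J) through representatives in M_n(V). *)
Definition herm_mod (J : (H -> H) -> Prop) n (X : opmat n) : Prop :=
  forall i j, exists2 S, is_adjoint (X i j) S & modJ J S (X j i).

Definition add_mat n (X Y : opmat n) : opmat n := fun i j h => X i j h + Y i j h.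
Definition scale_mat n (r : C) (X : opmat n) : opmat n := fun i j h => r *: X i j h.
Definition opp_mat n (X : opmat n) : opmat n := fun i j h => - X i j h.
(* alpha^* X alpha, for alpha in M_{n,m}(C) *)
Definition conj_mat n m (alpha : 'M[C]_(n, m)) (X : opmat n) : opmat m :=
  fun k l h => \sum_(i < n) \sum_(j < n) (((alpha i k)^*) * alpha j l) *: X i j h.
Definition diag_op n (e : H -> H) : opmat n :=
  fun i j h => if i == j then e h else 0.

(* (V/J, {D_n}_n, e + J) is an operator system, written via representatives:
   J is a *-closed subspace of V (so V/J is a *-vector space), each D_n is a
   subset of M_n(V/J)_h (a J-saturated set of hermitian-mod-J matrices over V),
   {D_n} is a proper matrix ordering, and e + J is an Archimedean matrix
   order unit. *)
Definition quotient_operator_system (V J : (H -> H) -> Prop)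
    (D : forall n, opmat n -> Prop) (e : H -> H) : Prop :=
  [/\
      [/\ forall x, J x -> V x,
          J (fun _ => 0),
          forall (a : C) x y, J x -> J y -> J (fun h => a *: x h + y h)
        & forall x, J x -> exists2 y, J y & is_adjoint x y],
      [/\ forall n (X : opmat n), (0 < n)%N -> D n X -> in_mat V X /\ herm_mod J X
        & forall n (X Y : opmat n), (0 < n)%N -> D n X -> in_mat V Y ->
            (forall i j, modJ J (X i j) (Y i j)) -> D n Y],
      [/\ forall n (X Y : opmat n), (0 < n)%N -> D n X -> D n Y -> D n (add_mat X Y)
        & forall n (r : C) (X : opmat n), (0 < n)%N -> 0 <= r -> D n X -> D n (scale_mat r X)],
      [/\
      (forall n m (alpha : 'M[C]_(n, m)) (X : opmat n), (0 < n)%N -> (0 < m)%N ->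
          D n X -> D m (conj_mat alpha X)) &
      (forall n (X : opmat n), (0 < n)%N -> D n X -> D n (opp_mat X) ->
          forall i j, J (X i j))] &
      [/\ V e,
          (exists2 S, is_adjoint e S & modJ J S e),
          (forall n (X : opmat n), (0 < n)%N -> in_mat V X -> herm_mod J X ->
             exists2 r : C, 0 < r & D n (add_mat (scale_mat r (@diag_op n e)) (opp_mat X)))
        & (forall n (X : opmat n), (0 < n)%N -> in_mat V X -> herm_mod J X ->
             (forall r : C, 0 < r -> D n (add_mat (scale_mat r (@diag_op n e)) X)) ->
             D n X)]].

(* the cones C~(p_n) = image of C(p_n) in M_n(V/J_p), via representatives *)
Definition Ctilde V p n (X : opmat n) : Prop :=
  in_mat V X /\
  exists2 Y : opmat n, Cpn V p Y & forall i j, modJ (Jp V p) (X i j) (Y i j).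

End OperatorSystems.

From HB Require Import structures.
From mathcomp Require Import all_boot all_order all_algebra.
From mathcomp Require Import reals complex ring.
From Stdlib Require Import FunctionalExtensionality.
Set Implicit Arguments. Unset Strict Implicit. Unset Printing Implicit Defensive.
Import Order.TTheory GRing.Theory Num.Theory.
Local Open Scope ring_scope.

(* Since p is a projection, J_p is exactly the set of x in V with p x p = 0: for
   x in C(p) and -x in C(p) the form h |-> <p x p h, h> vanishes, so p x p = 0 by
   polarization; conversely such an x is A + iB with A, B hermitian and
   p A p = p B p = 0, so that A, B lie in C(p) ∩ -C(p). Hence
   x + J_p = y + J_p iff p x p = p y p, and every axiom for the quotient becomes a
   statement about the compressed forms v |-> <p_n X p_n v, v> on H^n. The cone and
   matrix-ordering axioms are identities between such forms, properness is
   polarization again, and p + J_p is an Archimedean order unit because, for a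
   hermitian X with entries bounded by K, the form of X is dominated by n (K + 1)
   times that of p_n. *)

Lemma half_add (F : numFieldType) : (2^-1 : F) + 2^-1 = 1.
Proof. by field. Qed.

Lemma conj_half (F : numClosedFieldType) : (2^-1 : F)^* = 2^-1.
Proof. by rewrite conj_Creal // rpredV realn. Qed.

Section InnerProduct.
Variable R : realType.
Local Notation C := R[i].
Variable H : lmodType C.
Variable ip : H -> H -> C.
Hypothesis hil : is_hilbert_space ip.

Lemma ipDZl a x y z : ip (a *: x + y) z = a * ip x z + ip y z.
Proof. by case: hil. Qed.
Lemma ipC x y : ip y x = (ip x y)^*.
Proof. by case: hil. Qed.
Lemma ip_ge0 x : 0 <= ip x x.
Proof. by case: hil. Qed.
Lemma ip_eq0 x : ip x x = 0 -> x = 0.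
Proof. by case: hil => _ _ _ eq0 _; apply: eq0. Qed.

Lemma ip0l z : ip 0 z = 0.
Proof.
have e := ipDZl 1 0 0 z; rewrite scaler0 addr0 mul1r in e.
by apply: (addrI (ip 0 z)); rewrite addr0 -e.
Qed.
Lemma ipDl x y z : ip (x + y) z = ip x z + ip y z.
Proof. by have := ipDZl 1 x y z; rewrite scale1r mul1r. Qed.
Lemma ipZl a x z : ip (a *: x) z = a * ip x z.
Proof. by have := ipDZl a x 0 z; rewrite !addr0 ip0l addr0. Qed.
Lemma ipNl x z : ip (- x) z = - ip x z.
Proof. by rewrite -scaleN1r ipZl mulN1r. Qed.
Lemma ip_suml (I : Type) (r : seq I) (P : pred I) (F : I -> H) z :
  ip (\sum_(i <- r | P i) F i) z = \sum_(i <- r | P i) ip (F i) z.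
Proof. by apply: (big_morph (ip^~ z)) => [x y|]; [exact: ipDl | exact: ip0l]. Qed.

Lemma ip0r z : ip z 0 = 0.
Proof. by rewrite (ipC 0 z) ip0l conjC0. Qed.
Lemma ipDr x y z : ip z (x + y) = ip z x + ip z y.
Proof. by rewrite (ipC (x + y) z) (ipC x z) (ipC y z) ipDl rmorphD. Qed.
Lemma ipZr a x z : ip z (a *: x) = a^* * ip z x.
Proof. by rewrite (ipC (a *: x) z) (ipC x z) ipZl rmorphM. Qed.
Lemma ipNr x z : ip z (- x) = - ip z x.
Proof. by rewrite -scaleN1r ipZr rmorphN rmorph1 mulN1r. Qed.
Lemma ip_sumr (I : Type) (r : seq I) (P : pred I) (F : I -> H) z :
  ip z (\sum_(i <- r | P i) F i) = \sum_(i <- r | P i) ip z (F i).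
Proof. by apply: (big_morph (ip z)) => [x y|]; [exact: ipDr | exact: ip0r]. Qed.

Lemma ip_extl a b : (forall w, ip a w = ip b w) -> a = b.
Proof.
move=> eab; apply/eqP; rewrite -subr_eq0; apply/eqP/ip_eq0.
by rewrite ipDl ipNl eab subrr.
Qed.

Lemma ip_cross_le a b : ip a b + ip b a <= ip a a + ip b b.
Proof.
rewrite -subr_ge0; have -> : ip a a + ip b b - (ip a b + ip b a) = ip (a - b) (a - b).
  by rewrite ipDl ipNl !ipDr !ipNr; ring.
exact: ip_ge0.
Qed.

Definition is_linear (T : H -> H) := forall (a : C) x y, T (a *: x + y) = a *: T x + T y.

Section Linear.
Variable T : H -> H.
Hypothesis linT : is_linear T.

Lemma lin0 : T 0 = 0.
Proof.
have e := linT 1 0 0; rewrite scaler0 addr0 scale1r in e.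
by apply: (addrI (T 0)); rewrite addr0 -e.
Qed.
Lemma linD x y : T (x + y) = T x + T y.
Proof. by have := linT 1 x y; rewrite !scale1r. Qed.
Lemma linZ a x : T (a *: x) = a *: T x.
Proof. by have := linT a x 0; rewrite !addr0 lin0 addr0. Qed.
Lemma linN x : T (- x) = - T x.
Proof. by rewrite -scaleN1r linZ scaleN1r. Qed.
Lemma linB x y : T (x - y) = T x - T y.
Proof. by rewrite linD linN. Qed.
Lemma lin_sum (I : Type) (r : seq I) (P : pred I) (F : I -> H) :
  T (\sum_(i <- r | P i) F i) = \sum_(i <- r | P i) T (F i).
Proof. by apply: (big_morph T) => [x y|]; [exact: linD | exact: lin0]. Qed.
End Linear.

Lemma adjointC T S : is_adjoint ip T S -> is_adjoint ip S T.
Proof. by move=> aTS u v; rewrite (ipC v (S u)) -aTS -ipC. Qed.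
Lemma adjoint_ext T S T' S' : is_adjoint ip T S -> T =1 T' -> S =1 S' ->
  is_adjoint ip T' S'.
Proof. by move=> aTS eT eS u v; rewrite -eT -eS. Qed.
Lemma adjoint_comb (a b : C) T1 S1 T2 S2 :
  is_adjoint ip T1 S1 -> is_adjoint ip T2 S2 ->
  is_adjoint ip (fun h => a *: T1 h + b *: T2 h) (fun h => a^* *: S1 h + b^* *: S2 h).
Proof. by move=> a1 a2 u v; rewrite ipDl !ipZl ipDr !ipZr !conjCK a1 a2. Qed.
Lemma adjointZ a T S : is_adjoint ip T S ->
  is_adjoint ip (fun h => a *: T h) (fun h => a^* *: S h).
Proof. by move=> aTS u v; rewrite ipZl ipZr conjCK aTS. Qed.
Lemma adjointD T S T' S' : is_adjoint ip T S -> is_adjoint ip T' S' ->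
  is_adjoint ip (fun h => T h + T' h) (fun h => S h + S' h).
Proof. by move=> a1 a2 u v; rewrite ipDl ipDr a1 a2. Qed.
Lemma adjointN T S : is_adjoint ip T S -> is_adjoint ip (fun h => - T h) (fun h => - S h).
Proof. by move=> aTS u v; rewrite ipNl ipNr aTS. Qed.
Lemma adjoint0 : is_adjoint ip (fun _ => 0) (fun _ => 0).
Proof. by move=> u v; rewrite ip0l ip0r. Qed.

Lemma adjoint_sum2 (I : finType) (c : I -> I -> C) (T S : I -> I -> H -> H) :
  (forall i j, is_adjoint ip (T i j) (S i j)) ->
  is_adjoint ip (fun h => \sum_i \sum_j c i j *: T i j h)
                (fun h => \sum_i \sum_j (c i j)^* *: S i j h).
Proof.
move=> aTS u v; rewrite ip_suml ip_sumr; apply: eq_bigr => i _.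
rewrite ip_suml ip_sumr; apply: eq_bigr => j _.
by rewrite ipZl ipZr conjCK aTS.
Qed.

Lemma bounded_op_bound T : bounded_op ip T ->
  exists2 M : C, 0 <= M & forall x, ip (T x) (T x) <= M * ip x x.
Proof.
case=> linT [M bM]; exists `|M| => // x.
have [/ip_eq0 -> | xn0] := eqVneq (ip x x) 0; first by rewrite (lin0 linT) ip0l mulr0.
have xp : 0 < ip x x by rewrite lt_def xn0 ip_ge0.
have M0 : 0 <= M by rewrite -(pmulr_lge0 _ xp); apply: le_trans (bM x); apply: ip_ge0.
by rewrite ger0_norm.
Qed.

Lemma bounded_mat_bound n (T : opmat H n) : (forall i j, bounded_op ip (T i j)) ->
  exists2 K : C, 0 <= K & forall i j x, ip (T i j x) (T i j x) <= K * ip x x.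
Proof.
move=> bT; have /fin_all_exists2[M M0 bM] : forall ij : 'I_n * 'I_n,
    exists2 M : C, 0 <= M & forall x, ip (T ij.1 ij.2 x) (T ij.1 ij.2 x) <= M * ip x x.
  by move=> ij; apply: bounded_op_bound.
exists (\sum_ij M ij) => [|i j x]; first exact: sumr_ge0.
apply: le_trans (bM (i, j) x) _; rewrite ler_wpM2r ?ip_ge0 //.
by rewrite (bigD1 (i, j)) //= lerDl sumr_ge0.
Qed.

Section OperatorSystem.
Variables (V : (H -> H) -> Prop) (p : H -> H).
Hypotheses (osV : concrete_operator_system ip V) (Vp : V p) (prj : is_projection ip p).

Lemma V_bounded T : V T -> bounded_op ip T.
Proof. by case: osV => bV _ _ _; apply: bV. Qed.
Lemma V_lin T : V T -> is_linear T.
Proof. by case/V_bounded. Qed.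
Lemma V_id : V (fun h => h).
Proof. by case: osV. Qed.
Lemma V_comb a S T : V S -> V T -> V (fun h => a *: S h + T h).
Proof. by case: osV => _ _ combV _; apply: combV. Qed.
Lemma V_adjoint T : V T -> exists2 S, V S & is_adjoint ip T S.
Proof. by case: osV => _ _ _ adjV; apply: adjV. Qed.
Lemma V_ext S T : V S -> S =1 T -> V T.
Proof. by move=> VS /functional_extensionality <-. Qed.

Lemma V0 : V (fun _ => 0).
Proof. by apply: V_ext (V_comb (-1) V_id V_id) _ => h; rewrite scaleN1r addNr. Qed.
Lemma VZ a T : V T -> V (fun h => a *: T h).
Proof. by move=> VT; apply: V_ext (V_comb a VT V0) _ => h; rewrite addr0. Qed.
Lemma VD S T : V S -> V T -> V (fun h => S h + T h).
Proof. by move=> VS VT; apply: V_ext (V_comb 1 VS VT) _ => h; rewrite scale1r. Qed.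
Lemma VN T : V T -> V (fun h => - T h).
Proof. by move=> VT; apply: V_ext (VZ (-1) VT) _ => h; rewrite scaleN1r. Qed.
Lemma VB S T : V S -> V T -> V (fun h => S h - T h).
Proof. by move=> VS VT; apply: VD VS (VN VT). Qed.
Lemma V_sum (I : Type) (r : seq I) (F : I -> H -> H) :
  (forall i, V (F i)) -> V (fun h => \sum_(i <- r) F i h).
Proof.
move=> VF; elim: r => [|a r IHr]; first by apply: V_ext V0 _ => h; rewrite big_nil.
by apply: V_ext (VD (VF a) IHr) _ => h; rewrite big_cons.
Qed.

Lemma p_lin : is_linear p.
Proof. by case: prj => [[]]. Qed.
Lemma p_adjoint : is_adjoint ip p p.
Proof. by case: prj => _ []. Qed.
Lemma p_idem h : p (p h) = p h.
Proof. by case: prj => _ [_ ->]. Qed.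

Lemma V_diag n i j : V (@diag_op _ _ n p i j).
Proof. by rewrite /diag_op; case: (i == j); [exact: Vp | exact: V0]. Qed.
Lemma adjoint_diag n i j : is_adjoint ip (@diag_op _ _ n p i j) (diag_op p j i).
Proof. by rewrite /diag_op eq_sym; case: (j == i); [exact: p_adjoint | exact: adjoint0]. Qed.

Lemma V_conj n m (alpha : 'M[C]_(n, m)) (X : opmat H n) :
  in_mat V X -> in_mat V (conj_mat alpha X).
Proof.
by move=> VX k l; apply: V_sum => i; apply: V_sum => j; apply: VZ.
Qed.

Lemma herm_conj n m (alpha : 'M[C]_(n, m)) (Y : opmat H n) :
  herm_mat ip Y -> herm_mat ip (conj_mat alpha Y).
Proof.
move=> hY k l.
apply: adjoint_ext (adjoint_sum2 (fun i j => (alpha i k)^* * alpha j l) hY) _ _ => // h.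
rewrite /conj_mat exchange_big; apply: eq_bigr => i _; apply: eq_bigr => j _.
by rewrite rmorphM /= conjCK mulrC.
Qed.

Definition pequiv (T U : H -> H) := forall h, p (T (p h)) = p (U (p h)).

Lemma pequiv_sym T U : pequiv T U -> pequiv U T.
Proof. by move=> eTU h; rewrite eTU. Qed.
Lemma pequiv_trans T U W : pequiv T U -> pequiv U W -> pequiv T W.
Proof. by move=> eTU eUW h; rewrite eTU eUW. Qed.

Lemma pequiv_adjoint T S T' S' :
  is_adjoint ip T S -> is_adjoint ip T' S' -> pequiv T T' -> pequiv S S'.
Proof.
move=> aTS aTS' eTT' h; apply: ip_extl => w.
by rewrite !p_adjoint (adjointC aTS) (adjointC aTS') !p_adjoint eTT'.
Qed.

Lemma adjoint_compr0 T S : is_adjoint ip T S -> (forall h, p (T (p h)) = 0) ->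
  forall h, p (S (p h)) = 0.
Proof.
move=> aTS T0 h; rewrite (pequiv_adjoint aTS adjoint0) ?(lin0 p_lin) // => h'.
by rewrite T0 (lin0 p_lin).
Qed.

Lemma pequiv_conj n m (alpha : 'M[C]_(n, m)) (X Y : opmat H n) :
  (forall i j, pequiv (X i j) (Y i j)) ->
  forall k l, pequiv (conj_mat alpha X k l) (conj_mat alpha Y k l).
Proof.
move=> eXY k l h; rewrite /conj_mat !(lin_sum p_lin); apply: eq_bigr => i _.
by rewrite !(lin_sum p_lin); apply: eq_bigr => j _; rewrite !(linZ p_lin) eXY.
Qed.

Section CompressedForm.
Variable n : nat.
Implicit Types (X Y : opmat H n) (v w : 'I_n -> H).

Definition pform Y v w := \sum_(i < n) ip (\sum_(j < n) p (Y i j (p (v j)))) (w i).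
Definition pnorm v := \sum_(i < n) ip (p (v i)) (p (v i)).

Lemma pformDl Y v v' w : (forall i j, is_linear (Y i j)) ->
  pform Y (fun k => v k + v' k) w = pform Y v w + pform Y v' w.
Proof.
move=> linY; rewrite /pform -big_split; apply: eq_bigr => i _ /=.
rewrite -ipDl -big_split; congr ip; apply: eq_bigr => j _ /=.
by rewrite (linD p_lin) (linD (linY _ _)) (linD p_lin).
Qed.
Lemma pformZl Y a v w : (forall i j, is_linear (Y i j)) ->
  pform Y (fun k => a *: v k) w = a * pform Y v w.
Proof.
move=> linY; rewrite /pform mulr_sumr; apply: eq_bigr => i _ /=.
rewrite -ipZl scaler_sumr; congr ip; apply: eq_bigr => j _ /=.
by rewrite (linZ p_lin) (linZ (linY _ _)) (linZ p_lin).
Qed.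
Lemma pformDr Y v w w' : pform Y v (fun k => w k + w' k) = pform Y v w + pform Y v w'.
Proof. by rewrite /pform -big_split; apply: eq_bigr => i _; rewrite ipDr. Qed.
Lemma pformZr Y a v w : pform Y v (fun k => a *: w k) = a^* * pform Y v w.
Proof. by rewrite /pform mulr_sumr; apply: eq_bigr => i _; rewrite ipZr. Qed.

Lemma pform_add X Y v w : pform (add_mat X Y) v w = pform X v w + pform Y v w.
Proof.
rewrite /pform -big_split; apply: eq_bigr => i _ /=.
by rewrite -ipDl -big_split; congr ip; apply: eq_bigr => j _; rewrite (linD p_lin).
Qed.
Lemma pform_scale r X v w : pform (scale_mat r X) v w = r * pform X v w.
Proof.
rewrite /pform mulr_sumr; apply: eq_bigr => i _ /=.
by rewrite -ipZl scaler_sumr; congr ip; apply: eq_bigr => j _; rewrite (linZ p_lin).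
Qed.
Lemma pform_opp X v w : pform (opp_mat X) v w = - pform X v w.
Proof.
rewrite /pform -sumrN; apply: eq_bigr => i _ /=.
by rewrite -ipNl -sumrN; congr ip; apply: eq_bigr => j _; rewrite (linN p_lin).
Qed.
Lemma pform_pequiv X Y v w : (forall i j, pequiv (X i j) (Y i j)) -> pform X v w = pform Y v w.
Proof.
by move=> eXY; apply: eq_bigr => i _; congr ip; apply: eq_bigr => j _; rewrite eXY.
Qed.

Lemma pnorm_ge0 v : 0 <= pnorm v.
Proof. by apply: sumr_ge0 => i _; apply: ip_ge0. Qed.
Lemma pform_diag v : pform (diag_op p) v v = pnorm v.
Proof.
apply: eq_bigr => i _; rewrite (bigD1 i) //= big1 ?addr0 /diag_op ?eqxx.
  by rewrite !p_idem -{1}p_idem p_adjoint.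
by move=> j /negPf; rewrite eq_sym => ->; rewrite (lin0 p_lin).
Qed.

(* By polarization, which needs the complex scalars. *)
Lemma pform_eq0 Y : (forall i j, is_linear (Y i j)) -> (forall v, pform Y v v = 0) ->
  forall i j h, p (Y i j (p h)) = 0.
Proof.
move=> linY Y0.
have pY0 v w : pform Y v w = 0.
  have := Y0 (fun k => v k + w k).
  rewrite pformDl // !pformDr !Y0 add0r addr0 => vw0.
  have := Y0 (fun k => v k + 'i *: w k).
  rewrite pformDl // !pformDr pformZl // !pformZr pformZl // !Y0 !mulr0 add0r addr0.
  rewrite conjCi mulNr addrC -mulrBr => /eqP; rewrite mulf_eq0 (negPf (neq0Ci _)) /=.
  rewrite subr_eq0 => /eqP wv.
  by move/eqP: vw0; rewrite wv -mulr2n mulrn_eq0 => /eqP.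
move=> i j h; set g := p (Y i j (p h)); apply: ip_eq0.
have := pY0 (fun k => if k == j then h else 0) (fun k => if k == i then g else 0).
rewrite /pform (bigD1 i) //= eqxx [X in _ + X]big1 ?addr0; last first.
  by move=> k /negPf ->; rewrite ip0r.
rewrite (bigD1 j) //= eqxx [X in _ + X]big1 ?addr0 //.
by move=> k /negPf ->; rewrite (lin0 p_lin) (lin0 (linY _ _)) (lin0 p_lin).
Qed.

Lemma pform_herm_le X K v : herm_mat ip X ->
  (forall i j x, ip (X i j x) (X i j x) <= K * ip x x) ->
  pform X v v + pform X v v <= n%:R * (K + 1) * pnorm v.
Proof.
move=> hX bX; pose u i := p (v i).
have eG : pform X v v = \sum_i \sum_j ip (X i j (u j)) (u i).
  by apply: eq_bigr => i _; rewrite ip_suml; apply: eq_bigr => j _; rewrite p_adjoint.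
have eG' : pform X v v = \sum_i \sum_j ip (u i) (X i j (u j)).
  rewrite eG exchange_big; apply: eq_bigr => i _; apply: eq_bigr => j _; exact: hX.
have -> : n%:R * (K + 1) * pnorm v =
    \sum_i \sum_j (K * ip (u j) (u j) + ip (u i) (u i)).
  under eq_bigr => i _ do rewrite big_split /= -mulr_sumr sumr_const card_ord.
  by rewrite big_split /= sumr_const card_ord sumrMnl /pnorm; ring.
rewrite {1}eG eG' -big_split; apply: ler_sum => i _.
rewrite -big_split; apply: ler_sum => j _.
exact: le_trans (ip_cross_le _ _) (lerD (bX i j (u j)) (lexx _)).
Qed.

End CompressedForm.

Lemma pform_conj n m (alpha : 'M[C]_(n, m)) (Y : opmat H n) v :
  (forall i j, is_linear (Y i j)) ->
  pform (conj_mat alpha Y) v v =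
  pform Y (fun j => \sum_l alpha j l *: v l) (fun j => \sum_l alpha j l *: v l).
Proof.
move=> linY.
have -> : pform (conj_mat alpha Y) v v = \sum_k \sum_l \sum_i \sum_j
    ((alpha i k)^* * alpha j l) * ip (p (Y i j (p (v l)))) (v k).
  apply: eq_bigr => k _; rewrite ip_suml; apply: eq_bigr => l _.
  rewrite (lin_sum p_lin) ip_suml; apply: eq_bigr => i _.
  by rewrite (lin_sum p_lin) ip_suml; apply: eq_bigr => j _; rewrite (linZ p_lin) ipZl.
have -> : pform Y (fun j => \sum_l alpha j l *: v l) (fun j => \sum_l alpha j l *: v l) =
    \sum_i \sum_j \sum_k \sum_l (alpha i k)^* * (alpha j l * ip (p (Y i j (p (v l)))) (v k)).
  apply: eq_bigr => i _; rewrite ip_suml; apply: eq_bigr => j _.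
  rewrite ip_sumr; apply: eq_bigr => k _; rewrite ipZr -mulr_sumr; congr (_ * _).
  rewrite (lin_sum p_lin) (lin_sum (linY i j)) (lin_sum p_lin) ip_suml.
  by apply: eq_bigr => l _; rewrite (linZ p_lin) (linZ (linY i j)) (linZ p_lin) ipZl.
under eq_bigr => k _ do rewrite exchange_big.
rewrite exchange_big.
under eq_bigr => i _ do under eq_bigr => k _ do rewrite exchange_big.
under eq_bigr => i _ do rewrite exchange_big.
by do 4![apply: eq_bigr => ? _]; rewrite mulrA.
Qed.

Lemma Cp1_pair_compr0 y : Cp1 ip V p y -> Cp1 ip V p (fun h => - y h) ->
  forall h, p (y (p h)) = 0.
Proof.
move=> [Vy _ pos] [_ _ neg].
have linY : forall i j : 'I_1, is_linear y by move=> i j; apply: V_lin (Vy ord0 ord0).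
apply: (@pform_eq0 1 (fun _ _ => y) linY _ ord0 ord0) => v; apply/eqP.
have := neg v; rewrite -/(pform (opp_mat (fun _ _ => y)) v v) pform_opp oppr_ge0 => le0.
by rewrite eq_le le0; apply: pos.
Qed.

Lemma herm_compr0_Cp1 T : V T -> is_adjoint ip T T -> (forall h, p (T (p h)) = 0) ->
  Cp1 ip V p T /\ Cp1 ip V p (fun h => - T h).
Proof.
have Cp1_of U : V U -> is_adjoint ip U U -> (forall h, p (U (p h)) = 0) -> Cp1 ip V p U.
  move=> VU aU U0; split => // v; rewrite big1 // => i _.
  by rewrite big1 ?ip0l // => j _; apply: U0.
move=> VT aT T0; split; first exact: Cp1_of.
apply: Cp1_of; [exact: VN | exact: adjointN |].
by move=> h; rewrite (linN p_lin) T0 oppr0.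
Qed.

Lemma Jp_char x : Jp ip V p x <-> V x /\ forall h, p (x (p h)) = 0.
Proof.
split=> [[k [c [y [Cy ex]]]] | [Vx x0]].
  have y0 i := Cp1_pair_compr0 (Cy i).1 (Cy i).2.
  split=> [|h]; last first.
    by rewrite ex (lin_sum p_lin) big1 // => i _; rewrite (linZ p_lin) y0 scaler0.
  apply: V_ext (V_sum _ (fun i => VZ (c i) _)) (fun h => esym (ex h)) => i.
  by case: (Cy i) => -[/(_ ord0 ord0)].
have [S VS aS] := V_adjoint Vx.
have S0 := adjoint_compr0 aS x0.
(* x = A + i B, with A = (x + S)/2 and B = (x - S)/2i hermitian, S the adjoint of x. *)
pose c : C := 2^-1; pose d : C := (2 * 'i)^-1.
have dd : d^* = - d by rewrite /d fmorphV rmorphM /= conjCi conjC_nat mulrN invrN.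
have id_c : 'i * d = c by rewrite /d invfM mulrCA mulfV ?neq0Ci ?mulr1.
pose A h := c *: x h + c *: S h; pose B h := d *: x h + (- d) *: S h.
have aA : is_adjoint ip A A.
  by apply: adjoint_ext (adjoint_comb c c aS (adjointC aS)) _ _ => // h; rewrite conj_half addrC.
have aB : is_adjoint ip B B.
  apply: adjoint_ext (adjoint_comb d (- d) aS (adjointC aS)) _ _ => // h.
  by rewrite rmorphN /= dd opprK addrC.
have A0 h : p (A (p h)) = 0 by rewrite (linD p_lin) !(linZ p_lin) x0 S0 !scaler0 addr0.
have B0 h : p (B (p h)) = 0 by rewrite (linD p_lin) !(linZ p_lin) x0 S0 !scaler0 addr0.
exists 2, (fun i : 'I_2 => if i == ord0 then 1 else 'i),
  (fun i : 'I_2 => if i == ord0 then A else B); split.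
  move=> i; case: (i == ord0); apply: herm_compr0_Cp1 => //; apply: V_comb => //; exact: VZ.
move=> h; rewrite big_ord_recl big_ord1 /= scale1r /A /B !scalerDr !scalerA id_c mulrN id_c.
by rewrite scaleNr addrACA subrr addr0 -scalerDl half_add scale1r.
Qed.

Lemma modJ_pequiv T U : V T -> V U -> modJ (Jp ip V p) T U <-> pequiv T U.
Proof.
move=> VT VU; rewrite /modJ Jp_char; split=> [[_ TU0] h | eTU].
  by apply/eqP; rewrite -subr_eq0 -(linB p_lin) TU0.
by split=> [|h]; [exact: VB | rewrite (linB p_lin) eTU subrr].
Qed.

Lemma Ctilde_pequiv n (X : opmat H n) : Ctilde ip V p X <->
  in_mat V X /\ exists2 Y, Cpn ip V p Y & forall i j, pequiv (X i j) (Y i j).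
Proof.
by split=> -[VX [Y CY eXY]]; split=> //; exists Y => // i j;
  apply/modJ_pequiv => //; case: CY.
Qed.

Lemma herm_mod_rep n (X : opmat H n) : in_mat V X -> herm_mod ip (Jp ip V p) X ->
  exists X' : opmat H n,
    [/\ in_mat V X', herm_mat ip X' & forall i j, pequiv (X i j) (X' i j)].
Proof.
move=> VX hX.
have /fin_all_exists2[A VA aA] : forall ij : 'I_n * 'I_n,
    exists2 S, V S & is_adjoint ip (X ij.1 ij.2) S.
  by move=> ij; apply: V_adjoint.
exists (fun i j h => 2^-1 *: X i j h + 2^-1 *: A (j, i) h); split.
- by move=> i j; apply: V_comb (VX i j) (VZ _ (VA (j, i))).
- move=> i j; apply: adjoint_ext (adjoint_comb _ _ (aA (i, j)) (adjointC (aA (j, i)))) _ _ => // h.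
  by rewrite conj_half addrC.
- move=> i j; have [S aS mSX] := hX j i.
  have VS : V S.
    have [VSX _] := (Jp_char _).1 mSX.
    by apply: V_ext (VD VSX (VX i j)) _ => h; rewrite subrK.
  have eAX : pequiv (A (j, i)) (X i j).
    apply: pequiv_trans (pequiv_adjoint (aA (j, i)) aS (fun _ => erefl)) _.
    exact/(modJ_pequiv VS (VX i j)).
  by move=> h; rewrite (linD p_lin) !(linZ p_lin) eAX -scalerDl half_add scale1r.
Qed.

Lemma Jp_subspace : [/\ forall x, Jp ip V p x -> V x,
    Jp ip V p (fun _ => 0),
    forall (a : C) x y, Jp ip V p x -> Jp ip V p y -> Jp ip V p (fun h => a *: x h + y h)
  & forall x, Jp ip V p x -> exists2 y, Jp ip V p y & is_adjoint ip x y].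
Proof.
split=> [x /Jp_char[] // | | a x y /Jp_char[Vx x0] /Jp_char[Vy y0] | x /Jp_char[Vx x0]].
- by apply/Jp_char; split=> [|h]; [exact: V0 | exact: (lin0 p_lin)].
- apply/Jp_char; split=> [|h]; first exact: V_comb.
  by rewrite (linD p_lin) (linZ p_lin) x0 y0 scaler0 addr0.
have [S VS aS] := V_adjoint Vx; exists S => //.
by apply/Jp_char; split=> //; apply: adjoint_compr0 aS x0.
Qed.

Lemma Ctilde_herm_mod n (X : opmat H n) : Ctilde ip V p X ->
  in_mat V X /\ herm_mod ip (Jp ip V p) X.
Proof.
move=> /Ctilde_pequiv[VX [Y [VY hY _] eXY]]; split=> // i j.
have [S VS aS] := V_adjoint (VX i j); exists S => //; apply/modJ_pequiv => //.
exact: pequiv_trans (pequiv_adjoint aS (hY i j) (eXY i j)) (pequiv_sym (eXY j i)).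
Qed.

Lemma Ctilde_modJ n (X Y : opmat H n) : Ctilde ip V p X -> in_mat V Y ->
  (forall i j, modJ (Jp ip V p) (X i j) (Y i j)) -> Ctilde ip V p Y.
Proof.
move=> /Ctilde_pequiv[VX [Z CZ eXZ]] VY eXY; apply/Ctilde_pequiv; split=> //.
exists Z => // i j; apply: pequiv_trans (eXZ i j).
exact/pequiv_sym/(modJ_pequiv (VX i j) (VY i j)).
Qed.

Lemma Ctilde_add n (X Y : opmat H n) : Ctilde ip V p X -> Ctilde ip V p Y ->
  Ctilde ip V p (add_mat X Y).
Proof.
move=> /Ctilde_pequiv[VX [X' [VX' hX' X'ge0] eX]].
move=> /Ctilde_pequiv[VY [Y' [VY' hY' Y'ge0] eY]].
apply/Ctilde_pequiv; split=> [i j|]; first exact: VD.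
exists (add_mat X' Y') => [|i j h]; last by rewrite !(linD p_lin) eX eY.
split=> [i j | i j | v]; [exact: VD | exact: adjointD |].
by rewrite -/(pform _ v v) pform_add addr_ge0 //; [apply: X'ge0 | apply: Y'ge0].
Qed.

Lemma Ctilde_scale n (r : C) (X : opmat H n) : 0 <= r -> Ctilde ip V p X ->
  Ctilde ip V p (scale_mat r X).
Proof.
move=> r0 /Ctilde_pequiv[VX [X' [VX' hX' X'ge0] eX]].
apply/Ctilde_pequiv; split=> [i j|]; first exact: VZ.
exists (scale_mat r X') => [|i j h]; last by rewrite !(linZ p_lin) eX.
split=> [i j | i j | v]; first exact: VZ.
  by apply: adjoint_ext (adjointZ r (hX' i j)) _ _ => // h; rewrite conj_Creal ?ger0_real.
by rewrite -/(pform _ v v) pform_scale mulr_ge0 //; apply: X'ge0.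
Qed.

Lemma Ctilde_conj n m (alpha : 'M[C]_(n, m)) (X : opmat H n) : Ctilde ip V p X ->
  Ctilde ip V p (conj_mat alpha X).
Proof.
move=> /Ctilde_pequiv[VX [X' [VX' hX' X'ge0] eX]].
apply/Ctilde_pequiv; split; first exact: V_conj.
exists (conj_mat alpha X'); last exact: pequiv_conj.
split=> [||v]; [exact: V_conj | exact: herm_conj |].
rewrite -/(pform _ v v) pform_conj; first exact: X'ge0.
by move=> i j; apply: V_lin.
Qed.

Lemma Ctilde_proper n (X : opmat H n) : Ctilde ip V p X -> Ctilde ip V p (opp_mat X) ->
  forall i j, Jp ip V p (X i j).
Proof.
move=> /Ctilde_pequiv[VX [Y [VY _ Yge0] eXY]] /Ctilde_pequiv[_ [Z [_ _ Zge0] eXZ]] i j.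
apply/Jp_char; split=> [|h]; first exact: VX.
rewrite eXY; apply: pform_eq0 => [k l | v]; first exact: V_lin.
apply/eqP; rewrite eq_le Yge0 andbT.
have := Zge0 v; rewrite -/(pform _ v v) -(pform_pequiv _ _ eXZ) pform_opp.
by rewrite (pform_pequiv _ _ eXY) oppr_ge0.
Qed.

Lemma Ctilde_order_unit n (X : opmat H n) : (0 < n)%N -> in_mat V X ->
  herm_mod ip (Jp ip V p) X ->
  exists2 r : C, 0 < r & Ctilde ip V p (add_mat (scale_mat r (diag_op p)) (opp_mat X)).
Proof.
move=> n0 VX hX; have [X' [VX' hX' eX]] := herm_mod_rep VX hX.
have [K K0 bX'] := bounded_mat_bound (fun i j => V_bounded (VX' i j)).
pose r : C := n%:R * (K + 1).
have r0 : 0 < r by rewrite mulr_gt0 ?ltr0n ?ltr_wpDl.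
exists r => //; apply/Ctilde_pequiv; split=> [i j|].
  exact: VD (VZ r (V_diag i j)) (VN (VX i j)).
exists (add_mat (scale_mat r (diag_op p)) (opp_mat X')); last first.
  by move=> i j h; rewrite !(linD p_lin) !(linZ p_lin) !(linN p_lin) eX.
split=> [i j | i j | v]; first exact: VD (VZ r (V_diag i j)) (VN (VX' i j)).
  apply: adjoint_ext (adjointD (adjointZ r (adjoint_diag i j)) (adjointN (hX' i j))) _ _ => //.
  by move=> h; rewrite conj_Creal // ger0_real // ltW.
rewrite -/(pform _ v v) pform_add pform_scale pform_diag pform_opp.
have := pform_herm_le v hX' bX'; have := pnorm_ge0 v; rewrite -/r.
set G := pform X' v v; set N := pnorm v => N0 GG.
have -> : r * N - G = 2^-1 * ((r * N - (G + G)) + r * N) by field.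
by rewrite mulr_ge0 ?invr_ge0 ?ler0n // addr_ge0 ?subr_ge0 // mulr_ge0 // ltW.
Qed.

Lemma Ctilde_archimedean n (X : opmat H n) : in_mat V X -> herm_mod ip (Jp ip V p) X ->
  (forall r : C, 0 < r -> Ctilde ip V p (add_mat (scale_mat r (diag_op p)) X)) ->
  Ctilde ip V p X.
Proof.
move=> VX hX rX; have [X' [VX' hX' eX]] := herm_mod_rep VX hX.
apply/Ctilde_pequiv; split=> //; exists X' => //; split=> // v; rewrite -/(pform _ v v).
have ge0 r : 0 < r -> 0 <= r * pnorm v + pform X' v v.
  move=> r0; have /Ctilde_pequiv[_ [Y [_ _ Yge0] eY]] := rX r r0.
  have := Yge0 v; rewrite -/(pform _ v v) -(pform_pequiv _ _ eY).
  by rewrite pform_add pform_scale pform_diag (pform_pequiv _ _ eX).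
apply/ler_addgt0Pr => e e0.
have N1 : 0 < pnorm v + 1 by rewrite ltr_wpDl ?pnorm_ge0.
apply: le_trans (ge0 _ (divr_gt0 e0 N1)) _.
rewrite addrC lerD2l -mulrA ler_piMr ?ltW //.
by rewrite mulrC ltr_pdivrMr // mul1r ltrDl.
Qed.

End OperatorSystem.
End InnerProduct.

Theorem theorem3p6 (R : realType) (H : lmodType R[i]) (ip : H -> H -> R[i])
    (V : (H -> H) -> Prop) (p : H -> H) :
  is_hilbert_space ip ->
  concrete_operator_system ip V ->
  V p -> is_projection ip p ->
  quotient_operator_system ip V (Jp ip V p) (Ctilde ip V p) p.
Proof.
move=> hil osV Vp prj; split.
- exact: Jp_subspace.
- by split=> [n X _ | n X Y _]; [apply: Ctilde_herm_mod | apply: Ctilde_modJ].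
- by split=> [n X Y _ | n r X _]; [apply: Ctilde_add | apply: Ctilde_scale].
- by split=> [n m alpha X _ _ | n X _]; [apply: Ctilde_conj | apply: Ctilde_proper].
split=> //.
- by exists p; [exact: p_adjoint | apply/modJ_pequiv].
- by move=> n X; apply: Ctilde_order_unit.
- by move=> n X _; apply: Ctilde_archimedean.
Qed.
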